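(* Let $p>1$, $s\ge r\ge2$, let $Q$ be an $s$-vertex $r$-graph and let $H$ be an $n$-vertex $r$-graph ($n\ge s$) with $\lambda=\lambda^{(p)}(Q,H)$ and minimum $Q$-degree $\delta=\delta_Q(H)$. Let $\mathbf x$ be a principal $Q$-eigenvector of $H$. Then $$\Big(\frac{\lambda\,(\mathbf x_{\min})^{p-1}}{(s-1)!}\Big)^{p}\le\frac{s!\binom{n}{s-1}\delta^{p-1}}{n^{s-1}}-\Big(s!\tbinom{n}{s-1}\delta^{p-1}-\delta^{p}\Big)(\mathbf x_{\min})^{p(s-1)}.$$
   Context: An $r$-graph ($r\ge 2$) is a finite hypergraph all of whose edges have exactly $r$ vertices. For $I\subseteq V(H)$, $H[I]$ denotes the induced subhypergraph on $I$. For an $s$-vertex $r$-graph $Q$ and an $r$-graph $H$, $\mathcal N(Q,H)$ is the number of (not necessarily induced) subgraphs of $H$ isomorphic to $Q$. For an $n$-vertex $r$-graph $H$ with vertex set $[n]$ and $\mathbf x\in\mathbb R^n$, $P_{Q,H}(\mathbf x)=s!\sum_{\{i_1,\dots,i_s\}\in\binom{[n]}{s}}\mathcal N(Q,H[\{i_1,\dots,i_s\}])\,x_{i_1}\cdots x_{i_s}$, and for $p\ge1$, $\lambda^{(p)}(Q,H)=\max_{\|\mathbf x\|_p=1}P_{Q,H}(\mathbf x)$. A principal $Q$-eigenvector of $H$ is a nonnegative vector $\mathbf x$ with $\|\mathbf x\|_p=1$ and $P_{Q,H}(\mathbf x)=\lambda^{(p)}(Q,H)$; $\mathbf x_{\min}$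 denotes its smallest entry. The $Q$-degree of a vertex $v$ is $d_{Q,H}(v)=\sum\mathcal N(Q,H[I])$, the sum over all $s$-subsets $I\subseteq V(H)$ containing $v$; $\delta_Q(H)$ is the minimum $Q$-degree over all vertices. *)

From HB Require Import structures.
From mathcomp Require Import all_boot all_order all_algebra.
From mathcomp Require Import all_classical all_reals all_analysis.
Set Implicit Arguments. Unset Strict Implicit. Unset Printing Implicit Defensive.
Import Order.TTheory GRing.Theory Num.Theory.
Local Open Scope ring_scope.

Definition is_rgraph (r n : nat) (E : {set {set 'I_n}}) : bool :=
  [forall e in E, #|e| == r].

(* N(Q, H[I]) : number of (not necessarily induced) subgraphs (V', E') of the
   induced subgraph H[I] that are isomorphic to Q (Q on vertex set 'I_s with
   edge set EQ). *)
Definition NQ (s n : nat) (EQ : {set {set 'I_s}}) (EH : {set {set 'I_n}})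
  (I : {set 'I_n}) : nat :=
  #|[set VE : {set 'I_n} * {set {set 'I_n}} |
     [&& VE.1 \subset I, VE.2 \subset EH,
         [forall e in VE.2, e \subset VE.1] &
         [exists f : {ffun 'I_s -> 'I_n},
            [&& injectiveb f, f @: setT == VE.1 &
                [set f @: (e : {set 'I_s}) | e in EQ] == VE.2]]]]|.

Definition PQH {R : realType} (s n : nat) (EQ : {set {set 'I_s}})
  (EH : {set {set 'I_n}}) (x : 'I_n -> R) : R :=
  (s`!)%:R * \sum_(I : {set 'I_n} | #|I| == s)
                (NQ EQ EH I)%:R * \prod_(i in I) x i.

Definition pnorm {R : realType} (n : nat) (p : R) (x : 'I_n -> R) : R :=
  powR (\sum_i powR `|x i| p) p^-1.

(* lambda^{(p)}(Q,H) = max_{||x||_p = 1} P_{Q,H}(x) (taken as the supremum,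
   which is attained by compactness). *)
Definition lambdaQH {R : realType} (s n : nat) (p : R) (EQ : {set {set 'I_s}})
  (EH : {set {set 'I_n}}) : R :=
  sup [set PQH EQ EH y | y in [set y : 'I_n -> R | pnorm p y = 1]].

Definition principal_Qeigvec {R : realType} (s n : nat) (p : R)
  (EQ : {set {set 'I_s}}) (EH : {set {set 'I_n}}) (x : 'I_n -> R) : Prop :=
  (forall i, 0 <= x i) /\ pnorm p x = 1 /\ PQH EQ EH x = lambdaQH p EQ EH.

Definition Qdeg (s n : nat) (EQ : {set {set 'I_s}}) (EH : {set {set 'I_n}})
  (v : 'I_n) : nat :=
  \sum_(I : {set 'I_n} | (#|I| == s) && (v \in I)) NQ EQ EH I.

(* minimum Q-degree (the max is only used as the neutral seed; n > 0) *)
Definition minQdeg (s n : nat) (EQ : {set {set 'I_s}}) (EH : {set {set 'I_n}})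
  : nat :=
  \big[minn/ \max_(v < n) Qdeg EQ EH v]_(v < n) Qdeg EQ EH v.

(* smallest entry of x (the max entry is only the neutral seed; n > 0) *)
Definition xmin {R : realType} (n : nat) (x : 'I_n -> R) : R :=
  \big[Num.min/ \big[Num.max/0]_(i < n) x i]_(i < n) x i.

From HB Require Import structures.
From mathcomp Require Import all_boot all_order all_algebra.
From mathcomp Require Import all_classical all_reals all_analysis.
From mathcomp Require Import ring lra.
Set Implicit Arguments. Unset Strict Implicit. Unset Printing Implicit Defensive.
Import Order.TTheory GRing.Theory Num.Theory.
Local Open Scope ring_scope.

(* Let v be a vertex of minimum Q-degree, z_i = x_i^p and m = xmin^p. The Lagrange
   condition for the principal eigenvector in the coordinate x_v reads
   s lambda x_v^(p-1) = s! D_v, where D_v = sum_{v in I} N(Q,H[I]) prod_{I \ v} x_i,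
   and x_v >= xmin bounds the left-hand side by D_v^p. Jensen's inequality with the
   weights N(Q,H[I]), whose sum is delta, gives
   D_v^p <= delta^(p-1) sum_{v in I} N(Q,H[I]) prod_{I \ v} z_i. As N(Q,H[I]) <= s!
   and every product is at least m^(s-1), the last sum is at most
   s! e_{s-1}(z off v) - (s! C(n-1,s-1) - delta) m^(s-1). Finally, Maclaurin's
   inequality with sum z = 1 gives e_{s-1}(z) <= C(n,s-1) / n^(s-1), and the terms
   of e_{s-1}(z) containing v contribute at least C(n-1,s-2) m^(s-1). *)

Lemma big_card_mem_setU1 (R : Type) (idx : R) (op : Monoid.com_law idx)
    (T : finType) (A : {set T}) (a : T) k (F : {set T} -> R) : a \in A ->
  \big[op/idx]_(J : {set T} | (J \subset A) && (#|J| == k.+1) && (a \in J)) F J =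
  \big[op/idx]_(J : {set T} | (J \subset A :\ a) && (#|J| == k)) F (a |: J).
Proof.
move=> aA; rewrite (reindex_onto (fun J => a |: J) (fun J => J :\ a)) /=; last first.
  by move=> J /andP[_ aJ]; rewrite finset.setD1K.
apply: eq_bigl => J; rewrite setU11 andbT subsetD1 finset.subUset finset.sub1set aA /=.
have [aJ|aJ] /= := boolP (a \in J).
  rewrite andbF; apply/negbTE/negP => /andP[_ /eqP E].
  by move: aJ; rewrite -E !inE eqxx.
by rewrite finset.setU1K // eqxx cardsU1 aJ add1n eqSS !andbT.
Qed.

Lemma big_card_mem_setD1 (R : Type) (idx : R) (op : Monoid.com_law idx)
    (T : finType) (a : T) k (F : {set T} -> R) : (0 < k)%N ->
  \big[op/idx]_(I : {set T} | (#|I| == k) && (a \in I)) F (I :\ a) =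
  \big[op/idx]_(J : {set T} | (J \subset [set~ a]) && (#|J| == k.-1)) F J.
Proof.
case: k => // k _.
transitivity (\big[op/idx]_(I : {set T} |
    (I \subset [set: T])%SET && (#|I| == k.+1) && (a \in I)) F (I :\ a)).
  by apply: eq_bigl => I; rewrite finset.subsetT.
rewrite big_card_mem_setU1 ?finset.in_setT // finset.setTD.
apply: eq_bigr => J /andP[JA _]; rewrite finset.setU1K //.
by apply/negP => /(fintype.subsetP JA); rewrite !inE eqxx.
Qed.

Section ElementarySymmetric.
Variables (R : realFieldType) (T : finType) (z : T -> R).
Implicit Types A : {set T}.

Definition esym k (A : {set T}) : R :=
  \sum_(J : {set T} | (J \subset A) && (#|J| == k)) \prod_(i in J) z i.

Lemma esym0 A : esym 0 A = 1.
Proof.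
rewrite /esym (big_pred1 finset.set0) ?finset.big_set0 // => J.
rewrite cards_eq0 andbC; case: eqP => [->|] //=; first by rewrite finset.sub0set eqxx.
by move=> /eqP/negbTE ->.
Qed.

Lemma esym_eq0 k A : (#|A| < k)%N -> esym k A = 0.
Proof.
move=> Ak; rewrite /esym big1 // => J /andP[/subset_leq_card JA /eqP Jk].
by move: JA; rewrite Jk leqNgt Ak.
Qed.

Lemma esymS_setD1 k A a : a \in A ->
  esym k.+1 A = esym k.+1 (A :\ a) + z a * esym k (A :\ a).
Proof.
move=> aA; rewrite /esym (bigID (fun J : {set T} => a \in J)) /= addrC.
congr (_ + _).
  apply: eq_bigl => J; rewrite subsetD1; case: (J \subset A) => //=.
  by rewrite andbC.
rewrite big_card_mem_setU1 // mulr_sumr; apply: eq_bigr => J /andP[JA _].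
by rewrite big_setU1 //=; move: JA; rewrite subsetD1 => /andP[].
Qed.

Lemma esym_ge_const m k A : 0 <= m -> {in A, forall i, m <= z i} ->
  'C(#|A|, k)%:R * m ^+ k <= esym k A.
Proof.
move=> m0 mz; rewrite -cards_draws -sumr_const.
rewrite (eq_bigl (fun J : {set T} => (J \subset A) && (#|J| == k))) => [|J]; last first.
  by rewrite inE.
rewrite mulr_suml; apply: ler_sum => J /andP[JA /eqP <-].
rewrite mul1r -prodr_const.
by apply: ler_prod => i iJ; rewrite m0 mz // (fintype.subsetP JA).
Qed.

End ElementarySymmetric.

Lemma AGM_exprn_mul (R : numFieldType) (a c : R) k : 0 <= a -> 0 <= c ->
  a ^+ k * c <= ((k%:R * a + c) / k.+1%:R) ^+ k.+1.
Proof.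
move=> a0 c0; pose E (i : 'I_k.+1) := if i == ord0 then c else a.
have [+ _] := @leif_AGM R _ predT E (fun i _ => ltac:(by rewrite /E; case: eqP)).
rewrite card_ord !big_mkcond !big_ord_recl /E /=.
by rewrite prodr_const sumr_const card_ord mulrC addrC mulr_natl.
Qed.

Lemma Maclaurin_step (R : realFieldType) (u b : R) N k : (k <= N)%N ->
  0 <= u -> 0 <= b ->
  'C(N, k.+1)%:R * u ^+ k.+1 + b * ('C(N, k)%:R * u ^+ k)
    <= 'C(N.+1, k.+1)%:R * ((N%:R * u + b) / N.+1%:R) ^+ k.+1.
Proof.
move=> kN u0 b0; set C := 'C(N.+1, k.+1)%:R.
have N1 : N.+1%:R != 0 :> R by rewrite pnatr_eq0.
have binN : 'C(N, k)%:R = k.+1%:R * C / N.+1%:R.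
  by rewrite /C -natrM -mul_bin_diag natrM /=; field.
have binNS : 'C(N, k.+1)%:R = (N%:R - k%:R) * C / N.+1%:R.
  rewrite /C -natrB // -natrM -[(N - k)%N]/(N.+1 - k.+1)%N -mul_bin_down.
  by rewrite natrM; field.
set c := ((N%:R - k%:R) * u + k.+1%:R * b) / N.+1%:R.
have c0 : 0 <= c.
  by rewrite divr_ge0 ?addr_ge0 ?mulr_ge0 // subr_ge0 ler_nat.
have mean_c : (k%:R * u + c) / k.+1%:R = (N%:R * u + b) / N.+1%:R.
  by rewrite /c; field; rewrite !nat1r !pnatr_eq0.
have -> : 'C(N, k.+1)%:R * u ^+ k.+1 + b * ('C(N, k)%:R * u ^+ k)
    = C * (u ^+ k * c) by rewrite binN binNS /c exprS; field.
rewrite -mean_c ler_wpM2l ?ler0n //; exact: AGM_exprn_mul.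
Qed.

Section Maclaurin.
Variables (R : realFieldType) (T : finType) (z : T -> R).
Hypothesis z_ge0 : forall i, 0 <= z i.

(* For [A = set0] the mean is [0 / 0 = 0], which is harmless because
   [esym z k set0] vanishes for [k > 0]. *)
Lemma Maclaurin_esym k (A : {set T}) :
  esym z k A <= 'C(#|A|, k)%:R * ((\sum_(i in A) z i) / #|A|%:R) ^+ k.
Proof.
move: {2}#|A| (erefl #|A|) => N; elim: N A k => [|N IH] A [|k] cA;
  rewrite ?esym0 ?bin0 ?mul1r ?expr0 //.
  by rewrite cA bin0n mul0r esym_eq0 ?cA.
have [|kN] := ltnP N k.
  rewrite -ltnS -cA => /(esym_eq0 z) ->.
  by rewrite mulr_ge0 ?exprn_ge0 ?divr_ge0 ?sumr_ge0.
have [a aA] : exists a, a \in A by apply/card_gt0P; rewrite cA.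
have cB : #|A :\ a| = N by move: cA; rewrite (cardsD1 a) aA add1n => -[].
rewrite (esymS_setD1 _ _ aA) (big_setD1 a aA) /= cA.
set S := \sum_(i in A :\ a) z i.
have -> : (z a + S) / N.+1%:R = (N%:R * (S / N%:R) + z a) / N.+1%:R.
  have [N0|N0] := eqVneq N 0%N; last first.
    by rewrite mulrCA mulfV ?pnatr_eq0 // mulr1 addrC.
  by rewrite N0 /S (cards0_eq (etrans cB N0)) big_set0 mul0r add0r addr0.
apply: le_trans (Maclaurin_step kN _ (z_ge0 a)); last by rewrite divr_ge0 ?sumr_ge0.
have IHB j := IH (A :\ a) j cB; rewrite cB in IHB.
by apply: lerD; [|apply: ler_wpM2l].
Qed.

End Maclaurin.

Lemma sum_mul_le_affine (R : realDomainType) (I : finType) (P : pred I) (w u : I -> R) M m :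
  (forall i, P i -> w i <= M) -> (forall i, P i -> m <= u i) ->
  \sum_(i | P i) w i * u i
    <= M * \sum_(i | P i) u i - (M * \sum_(i | P i) 1 - \sum_(i | P i) w i) * m.
Proof.
move=> wM mu; rewrite mulr_sumr mulr_sumr -!sumrB mulr_suml -sumrB.
apply: ler_sum => i Pi; have : 0 <= (M - w i) * (u i - m).
  by rewrite mulr_ge0 // subr_ge0 ?wM ?mu.
nra.
Qed.

Section RealPowers.
Variables (R : realType) (p : R).
Hypothesis p_gt1 : 1 < p.
Let p_gt0 : 0 < p. Proof. exact: lt_trans p_gt1. Qed.

Lemma powR_Bernoulli (u : R) : 0 <= u -> 1 + p * (u - 1) <= u `^ p.
Proof.
move=> u0; have p1_gt0 : 0 < p - 1 by rewrite subr_gt0.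
set q := p / (p - 1); have q0 : 0 < q by rewrite divr_gt0.
have pq : p^-1 + q^-1 = 1.
  by rewrite invf_div; field; rewrite !gt_eqF.
have := conjugate_powR u0 ler01 p_gt0 q0 pq.
rewrite powR1 mulr1 -(ler_pM2l p_gt0) mulrDr mulrCA mulfV ?gt_eqF // mulr1.
have -> : p * (1 / q) = p - 1 by rewrite /q; field; rewrite !gt_eqF.
lra.
Qed.

Lemma powR_tangent (a y : R) : 0 < a -> 0 <= y ->
  a `^ p + p * a `^ (p - 1) * (y - a) <= y `^ p.
Proof.
move=> a0 y0; have ya0 : 0 <= y / a by rewrite divr_ge0 // ltW.
have -> : y `^ p = a `^ p * (y / a) `^ p.
  by rewrite -powRM ?(ltW a0) // mulrCA mulfV ?gt_eqF // mulr1.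
apply: le_trans (ler_wpM2l (powR_ge0 _ _) (powR_Bernoulli ya0)).
rewrite -(mulr_powRB1 (ltW a0) p_gt0) le_eqVlt; apply/predU1P; left.
by field; rewrite gt_eqF.
Qed.

Lemma powR_prod (I : finType) (P : pred I) (F : I -> R) r :
  (forall i, 0 <= F i) -> (\prod_(i | P i) F i) `^ r = \prod_(i | P i) F i `^ r.
Proof.
move=> F0; suff [] : 0 <= \prod_(i | P i) F i /\
    (\prod_(i | P i) F i) `^ r = \prod_(i | P i) F i `^ r by [].
apply: (big_rec2 (fun a b => 0 <= a /\ a `^ r = b)); first by rewrite powR1.
by move=> i a b _ [a0 <-]; rewrite mulr_ge0 ?powRM.
Qed.

Lemma jensen_powR (I : finType) (P : pred I) (w y : I -> R) :
  (forall i, 0 <= w i) -> (forall i, 0 <= y i) ->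
  (\sum_(i | P i) w i * y i) `^ p <=
  (\sum_(i | P i) w i) `^ (p - 1) * \sum_(i | P i) w i * y i `^ p.
Proof.
move=> w0 y0; set W := \sum_(i | P i) w i; set T := \sum_(i | P i) w i * y i.
have rhs0 : 0 <= W `^ (p - 1) * \sum_(i | P i) w i * y i `^ p.
  by rewrite mulr_ge0 ?powR_ge0 // sumr_ge0 // => i _; rewrite mulr_ge0 ?powR_ge0.
have [T0|T0] := eqVneq T 0; first by rewrite T0 powR0 ?gt_eqF.
have W0 : 0 < W.
  rewrite lt0r sumr_ge0 // andbT; apply: contraNneq T0 => /psumr_eq0P W0.
  by rewrite /T big1 // => i Pi; rewrite W0 ?mul0r.
set M := T / W; have M0 : 0 < M.
  by rewrite divr_gt0 // lt0r T0 sumr_ge0 // => i _; rewrite mulr_ge0.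
have tangent : W * M `^ p <= \sum_(i | P i) w i * y i `^ p.
  apply: le_trans (ler_sum _ (fun i _ => ler_wpM2l (w0 i) (powR_tangent M0 (y0 i)))).
  rewrite le_eqVlt; apply/predU1P; left.
  under eq_bigr do rewrite mulrDr mulrCA mulrBr.
  rewrite big_split /= -mulr_suml -mulr_sumr sumrB -mulr_suml -/W -/T.
  by rewrite /M [W * (T / W)]mulrC divfK ?gt_eqF // subrr mulr0 addr0.
apply: le_trans (ler_wpM2l (powR_ge0 _ _) tangent).
rewrite mulrA -{2}(powRr1 (ltW W0)) -powRD ?(gt_eqF W0) ?implybT // subrK.
by rewrite -powRM ?(ltW W0) ?(ltW M0) // /M mulrC divfK ?gt_eqF.
Qed.

End RealPowers.

Section Fermat.
Variables (R : realType) (p : R).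

Lemma is_derive_powR_shift_lin (L K B q t : R) : 0 < t -> 0 <= B ->
  is_derive t 1 (fun u => L * (B + u `^ p) `^ q - u * K)
    (L * (q * (B + t `^ p) `^ (q - 1) * (p * t `^ (p - 1))) - K).
Proof.
move=> t0 B0.
have inner : is_derive t 1 (fun u => B + u `^ p) (p * t `^ (p - 1)).
  by have := is_deriveD (is_derive_cst B t 1) (is_derive1_powR p t0); rewrite add0r.
have outer : is_derive (B + t `^ p) 1 (fun w => w `^ q) (q * (B + t `^ p) `^ (q - 1)).
  by apply: is_derive1_powR; rewrite ltr_wpDl ?powR_gt0.
have lin : is_derive t 1 (fun u : R => u * K) K.
  have := is_deriveM (is_derive_id t 1) (is_derive_cst K t 1).
  by rewrite scaler0 add0r /GRing.scale /= mulr1.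
have comp := @is_derive1_comp _ (fun w => w `^ q) (fun u => B + u `^ p) t _ _ outer inner.
exact: is_deriveB (is_deriveZ L comp) lin.
Qed.

Lemma powR_shift_lin_stationary (L K B q c : R) : 0 < c -> 0 <= B ->
  (forall t, 0 < t -> L * (B + c `^ p) `^ q - c * K <= L * (B + t `^ p) `^ q - t * K) ->
  L * (q * (B + c `^ p) `^ (q - 1) * (p * c `^ (p - 1))) = K.
Proof.
move=> c0 B0 cmin; set f := fun u => L * (B + u `^ p) `^ q - u * K.
have fmin : is_derive c 1 f 0.
  apply: (@derive1_at_min _ _ 0 (2 * c)); first by rewrite mulr_ge0 // ltW.
  - move=> t; rewrite in_itv /= => /andP[t0 _].
    by case: (is_derive_powR_shift_lin L K q t0 B0).
  - by rewrite in_itv /= c0 /=; lra.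
  - by move=> t; rewrite in_itv /= => /andP[t0 _]; exact: cmin.
have := derive_val (is_derive := fmin).
rewrite (derive_val (is_derive := is_derive_powR_shift_lin L K q c0 B0)).
by move/eqP; rewrite subr_eq0 => /eqP.
Qed.

End Fermat.

Section QSpectralRadius.
Variables (R : realType) (p : R) (s n : nat).
Variables (EQ : {set {set 'I_s}}) (EH : {set {set 'I_n}}).
Hypothesis p_gt1 : 1 < p.
Let p_gt0 : 0 < p. Proof. exact: lt_trans p_gt1. Qed.
Local Notation P := (PQH EQ EH).
Local Notation lambda := (lambdaQH p EQ EH).
Implicit Types (y : 'I_n -> R) (v : 'I_n).

Lemma pnorm_eq1 y : pnorm p y = 1 -> \sum_i `|y i| `^ p = 1.
Proof.
rewrite /pnorm => /eqP; rewrite powR_eq1 => /or3P[/eqP //| |].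
  by rewrite ltNge sumr_ge0 // => i _; apply: powR_ge0.
by rewrite invr_eq0 gt_eqF.
Qed.

Lemma pnorm_eq1_le1 y i : pnorm p y = 1 -> `|y i| <= 1.
Proof.
move=> /pnorm_eq1 S1; rewrite leNgt; apply/negP => yi1.
have : 1 `^ p < `|y i| `^ p by apply: gt0_ltr_powR; rewrite ?nnegrE.
rewrite powR1 -S1 (bigD1 i) //= ltNge lerDl.
by move/negP; apply; apply: sumr_ge0 => j _; apply: powR_ge0.
Qed.

Lemma PQH_le_lambdaQH y : pnorm p y = 1 -> P y <= lambda.
Proof.
move=> y1; apply: ub_le_sup; last by exists y.
exists (s`!%:R * \sum_(I : {set 'I_n} | #|I| == s) (NQ EQ EH I)%:R) => _ [z /= z1 <-].
rewrite /PQH ler_wpM2l // ler_sum // => I _.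
rewrite -{2}[(NQ EQ EH I)%:R]mulr1 ler_wpM2l //.
apply: le_trans (ler_norm _) _; rewrite normr_prod.
by apply: prodr_ile1 => i _; rewrite normr_ge0 pnorm_eq1_le1.
Qed.

Lemma PQH_scale c y : P (fun i => c * y i) = c ^+ s * P y.
Proof.
rewrite /PQH mulrCA; congr (_ * _); rewrite mulr_sumr; apply: eq_bigr => I /eqP cI.
by rewrite big_split /= prodr_const cI mulrCA.
Qed.

Lemma PQH_le_lambdaQH_sum y : 0 < \sum_i `|y i| `^ p ->
  P y <= lambda * (\sum_i `|y i| `^ p) `^ (s%:R / p).
Proof.
set S := \sum_i _ => S0; set c := S `^ (- p^-1).
have c0 : 0 < c by apply: powR_gt0.
have cp : c `^ p = S^-1 by rewrite -powRrM mulNr mulVf ?gt_eqF // powR_inv1 ?ltW.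
have cs : (c ^+ s)^-1 = S `^ (s%:R / p).
  by rewrite -powR_mulrn ?ltW // -powRrM -powRN mulNr opprK mulrC.
have y1 : pnorm p (fun i => c * y i) = 1.
  rewrite /pnorm (eq_bigr (fun i => c `^ p * `|y i| `^ p)) => [|i _]; last first.
    by rewrite normrM gtr0_norm // powRM ?(ltW c0).
  by rewrite -mulr_sumr -/S cp mulVf ?gt_eqF // powR1.
have := PQH_le_lambdaQH y1; rewrite PQH_scale -ler_pdivlMl ?exprn_gt0 //.
by rewrite mulrC cs.
Qed.

Definition PQH_avoid v y : R :=
  \sum_(I : {set 'I_n} | (#|I| == s) && (v \notin I))
    (NQ EQ EH I)%:R * \prod_(i in I) y i.

(* [s`! * PQH_partial v y] is the partial derivative of [PQH] in the coordinate
   [y v], in which [PQH] is affine (PQH_split). *)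
Definition PQH_partial v y : R :=
  \sum_(I : {set 'I_n} | (#|I| == s) && (v \in I))
    (NQ EQ EH I)%:R * \prod_(i in I :\ v) y i.

Lemma PQH_split v y : P y = s`!%:R * (PQH_avoid v y + y v * PQH_partial v y).
Proof.
rewrite /PQH (bigID (fun I : {set 'I_n} => v \in I)) /= addrC; congr (_ * (_ + _)).
rewrite mulr_sumr; apply: eq_bigr => I /andP[_ vI].
by rewrite (big_setD1 v vI) /= mulrCA.
Qed.

Section OffCoordinate.
Variables (v : 'I_n) (y y' : 'I_n -> R).
Hypothesis yy' : forall i, i != v -> y i = y' i.

Lemma PQH_avoid_off : PQH_avoid v y = PQH_avoid v y'.
Proof.
apply: eq_bigr => I /andP[_ vI]; congr (_ * _); apply: eq_bigr => i iI.
by apply: yy'; apply: contraNneq vI => <-.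
Qed.

Lemma PQH_partial_off : PQH_partial v y = PQH_partial v y'.
Proof.
apply: eq_bigr => I _; congr (_ * _); apply: eq_bigr => i.
by rewrite !inE => /andP[/yy'].
Qed.

Lemma sum_powR_off :
  \sum_i `|y i| `^ p - `|y v| `^ p = \sum_i `|y' i| `^ p - `|y' v| `^ p.
Proof.
rewrite (bigD1 v) //= [in RHS](bigD1 v) //= [_ + _ - _]addrC addKr.
rewrite [_ + _ - _]addrC addKr; by apply: eq_bigr => i /yy' ->.
Qed.

End OffCoordinate.

Lemma principal_Qeigvec_eq x v : principal_Qeigvec p EQ EH x -> 0 < x v ->
  lambda * x v `^ (p - 1) * s%:R = s`!%:R * PQH_partial v x.
Proof.
(* Among the vectors that agree with [x] off [v], [P y - lambda * ||y||_p ^ s]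
   is maximal at [y = x], where it vanishes; Fermat's rule in [y v] is the claim. *)
move=> [x0 [/pnorm_eq1 x1 Px]] xv0.
set K := s`!%:R * PQH_partial v x; set B := \sum_i `|x i| `^ p - `|x v| `^ p.
have B0 : 0 <= B.
  by rewrite subr_ge0 (bigD1 v) //= lerDl sumr_ge0 // => i _; rewrite powR_ge0.
have Bx : B + x v `^ p = 1 by rewrite /B ger0_norm ?x0 // subrK x1.
have lambda_split : lambda = s`!%:R * PQH_avoid v x + x v * K.
  by rewrite -Px (PQH_split v) mulrDr mulrCA.
have cmin t : 0 < t -> lambda * (B + x v `^ p) `^ (s%:R / p) - x v * K
    <= lambda * (B + t `^ p) `^ (s%:R / p) - t * K.
  move=> t0; pose y i := if i == v then t else x i.
  have yx i : i != v -> y i = x i by rewrite /y => /negbTE ->.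
  have yv : y v = t by rewrite /y eqxx.
  have Sy : \sum_i `|y i| `^ p = B + t `^ p.
    by rewrite -(subrK (`|y v| `^ p) (\sum_i _)) (sum_powR_off yx) yv (gtr0_norm t0).
  have Sy0 : 0 < \sum_i `|y i| `^ p by rewrite Sy ltr_wpDl ?powR_gt0.
  have := PQH_le_lambdaQH_sum Sy0.
  rewrite Sy (PQH_split v) (PQH_avoid_off yx) (PQH_partial_off yx) yv.
  by rewrite Bx powR1 mulr1 lambda_split mulrDr mulrCA -/K; lra.
have := powR_shift_lin_stationary xv0 B0 cmin.
by rewrite Bx !powR1 mulr1 => <-; field; rewrite gt_eqF.
Qed.

End QSpectralRadius.

Lemma NQ_le_fact s n (EQ : {set {set 'I_s}}) (EH : {set {set 'I_n}}) (I : {set 'I_n}) :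
  #|I| = s -> (NQ EQ EH I <= s`!)%N.
Proof.
move=> cI; pose F := [set f : {ffun 'I_s -> 'I_n} in ffun_on (mem I) | injectiveb f].
pose g (f : {ffun 'I_s -> 'I_n}) := (f @: setT, [set f @: (e : {set 'I_s}) | e in EQ]).
have <- : #|F| = s`! by rewrite card_inj_ffuns_on card_ord cI ffactnn.
apply: leq_trans (leq_imset_card g F); apply: subset_leq_card.
apply/fintype.subsetP => -[V E]; rewrite inE /= => /and4P[VI _ _].
case/existsP => f /and3P[fi /eqP fV /eqP fE].
apply/imsetP; exists f; last by rewrite /g fV fE.
rewrite inE fi andbT; apply/ffun_onP => i.
by apply: (fintype.subsetP VI); rewrite -fV; apply/imsetP; exists i; rewrite ?in_setE.
Qed.

Lemma minQdeg_attained s n (EQ : {set {set 'I_s}}) (EH : {set {set 'I_n}}) :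
  (0 < n)%N -> exists v, minQdeg EQ EH = Qdeg EQ EH v.
Proof.
case: n EH => // n EH _; rewrite /minQdeg.
have [v _ ->] := @eq_bigmin _ nat _ _ ord0 predT (Qdeg EQ EH) isT (fun i _ => leq_bigmax i).
by exists v.
Qed.

Lemma xmin_le (R : realType) n (x : 'I_n -> R) i : xmin x <= x i.
Proof. exact: bigmin_le. Qed.

Lemma xmin_ge0 (R : realType) n (x : 'I_n -> R) : (forall i, 0 <= x i) -> 0 <= xmin x.
Proof.
move=> x0; apply: (big_ind (fun a => 0 <= a)) => // [|a b]; last by rewrite le_min => ->.
by apply: (big_ind (fun a => 0 <= a)) => // a b; rewrite le_max => ->.
Qed.

Section MinDegreeBound.
Variables (R : realType) (p : R) (s n : nat).
Variables (EQ : {set {set 'I_s}}) (EH : {set {set 'I_n}}) (x : 'I_n -> R) (v : 'I_n).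
Hypotheses (p_gt1 : 1 < p) (s_ge2 : (2 <= s)%N) (s_le_n : (s <= n)%N).
Hypothesis x_principal : principal_Qeigvec p EQ EH x.
Hypothesis v_min : minQdeg EQ EH = Qdeg EQ EH v.
Hypothesis xmin_gt0 : 0 < xmin x.

Let p_gt0 : 0 < p. Proof. exact: lt_trans p_gt1. Qed.
Let x_ge0 : forall i, 0 <= x i. Proof. by case: x_principal. Qed.
Local Notation lambda := (lambdaQH p EQ EH).
Local Notation delta := ((minQdeg EQ EH)%:R : R).
Local Notation D := (PQH_partial EQ EH v x).
Local Notation z := (fun i => x i `^ p).
Local Notation c := ((s`! * 'C(n, s.-1))%:R : R).
Local Notation m := (xmin x `^ p).
Local Notation containing_v I := ((#|I| == s) && (v \in I)).

Lemma lambda_xmin_le_partial : (lambda * xmin x `^ (p - 1) / (s.-1)`!%:R) `^ p <= D `^ p.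
Proof.
have xv0 : 0 < x v := lt_le_trans xmin_gt0 (xmin_le x v).
have lambda0 : 0 <= lambda.
  case: x_principal => _ [_ <-]; rewrite mulr_ge0 // sumr_ge0 // => I _.
  by rewrite mulr_ge0 // prodr_ge0.
have -> : D = lambda * x v `^ (p - 1) / (s.-1)`!%:R.
  apply: (@mulfI _ s`!%:R); first by rewrite pnatr_eq0 -lt0n fact_gt0.
  rewrite -(principal_Qeigvec_eq p_gt1 x_principal xv0).
  have -> : s`!%:R = s%:R * (s.-1)`!%:R :> R.
    by rewrite -natrM -{1}(prednK (ltnW s_ge2)) factS prednK // ltnW.
  by field; rewrite pnatr_eq0 -lt0n fact_gt0.
have xmin_nneg := ltW xmin_gt0.
apply: (ge0_ler_powR (ltW p_gt0)); rewrite ?nnegrE ?divr_ge0 ?mulr_ge0 ?powR_ge0 //.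
rewrite ler_wpM2r ?invr_ge0 // ler_wpM2l // ge0_ler_powR ?nnegrE ?subr_ge0 ?(ltW p_gt1) //.
exact: xmin_le.
Qed.

Lemma partial_powR_le : D `^ p <= delta `^ (p - 1) * PQH_partial EQ EH v z.
Proof.
have -> : delta = \sum_(I : {set 'I_n} | containing_v I) (NQ EQ EH I)%:R.
  by rewrite v_min natr_sum.
apply: le_trans (jensen_powR p_gt1 _ (fun I => ler0n _ _) _) _.
  by move=> I; rewrite prodr_ge0.
apply: ler_wpM2l; first exact: powR_ge0.
by apply: ler_sum => I _; rewrite powR_prod.
Qed.

Lemma xmin_powR_le i : m <= z i.
Proof. by rewrite ge0_ler_powR ?nnegrE ?xmin_le ?(ltW p_gt0) ?(ltW xmin_gt0). Qed.

Lemma partial_sum_le_esym : PQH_partial EQ EH v z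
  <= s`!%:R * esym z s.-1 [set~ v] - (s`!%:R * 'C(n.-1, s.-1)%:R - delta) * m ^+ s.-1.
Proof.
have s_gt0 : (0 < s)%N by apply: ltnW.
apply: le_trans (sum_mul_le_affine (M := s`!%:R) (m := m ^+ s.-1) _ _) _.
- by move=> I /andP[/eqP cI _]; rewrite ler_nat NQ_le_fact.
- move=> I /andP[/eqP cI vI].
  have <- : #|I :\ v| = s.-1 by move: cI; rewrite (cardsD1 v I) vI add1n => <-.
  rewrite -prodr_const.
  by apply: ler_prod => i _; rewrite powR_ge0 xmin_powR_le.
rewrite (big_card_mem_setD1 _ v (fun J => \prod_(i in J) z i)) //.
have -> : \sum_(I : {set 'I_n} | containing_v I) (1 : R) = 'C(n.-1, s.-1)%:R.
  rewrite (big_card_mem_setD1 _ v (fun=> 1)) //.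
  have <- : #|[set~ v]| = n.-1 by rewrite cardsC1 card_ord.
  by rewrite -cards_draws -sumr_const; apply: eq_bigl => J; rewrite inE.
by rewrite v_min /Qdeg natr_sum.
Qed.

Lemma esym_setC1_le : esym z s.-1 [set~ v]
  <= 'C(n, s.-1)%:R / n%:R ^+ s.-1 - 'C(n.-1, s.-2)%:R * m ^+ s.-1.
Proof.
have z_ge0 i : 0 <= z i by apply: powR_ge0.
have ss : s.-2.+1 = s.-1 by case: (s) s_ge2 => [|[|]].
have cV : #|[set~ v]| = n.-1 by rewrite cardsC1 card_ord.
have z1 : \sum_(i in [set: 'I_n]%SET) z i = 1.
  case: x_principal => _ [/(pnorm_eq1 p_gt1) <- _].
  by apply: eq_big => [i|i _]; rewrite ?finset.in_setT ?ger0_norm.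
have := Maclaurin_esym z_ge0 s.-1 [set: 'I_n]%SET.
rewrite -ss (esymS_setD1 _ _ (finset.in_setT v)) finset.setTD finset.cardsT card_ord z1 ss.
have : 'C(n.-1, s.-2)%:R * m ^+ s.-1 <= z v * esym z s.-2 [set~ v].
  rewrite -ss exprS mulrCA ler_pM ?mulr_ge0 ?exprn_ge0 ?powR_ge0 ?ler0n ?xmin_powR_le //.
  by rewrite -cV esym_ge_const ?powR_ge0 // => i _; apply: xmin_powR_le.
rewrite expr_div_n expr1n mulrA mulr1; lra.
Qed.

Lemma minQdeg_bound_xmin_gt0 :
  (lambda * xmin x `^ (p - 1) / ((s.-1)`!)%:R) `^ p
  <= c * delta `^ (p - 1) / (n%:R ^+ s.-1)
     - (c * delta `^ (p - 1) - delta `^ p) * xmin x `^ (p * (s.-1)%:R).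
Proof.
have n_gt0 : (0 < n)%N by rewrite (leq_trans _ s_le_n) // ltnW.
have pascal : 'C(n, s.-1) = ('C(n.-1, s.-1) + 'C(n.-1, s.-2))%N.
  have ss : s.-2.+1 = s.-1 by case: (s) s_ge2 => [|[|]].
  by rewrite -{1}(prednK n_gt0) -{1}ss binS ss.
have n0 : n%:R ^+ s.-1 != 0 :> R by rewrite expf_neq0 // pnatr_eq0 -lt0n.
rewrite powRrM powR_mulrn ?powR_ge0 // -(mulr_powRB1 (ler0n _ _) p_gt0).
apply: le_trans lambda_xmin_le_partial _; apply: le_trans partial_powR_le _.
apply: le_trans (ler_wpM2l (powR_ge0 _ _) partial_sum_le_esym) _.
have esym_bound := lerB (ler_wpM2l (ler0n _ s`!) esym_setC1_le)
  (lexx ((s`!%:R * 'C(n.-1, s.-1)%:R - delta) * m ^+ s.-1)).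
apply: le_trans (ler_wpM2l (powR_ge0 _ _) esym_bound) _.
by rewrite natrM pascal natrD le_eqVlt; apply/predU1P; left; field.
Qed.

End MinDegreeBound.

Theorem lemma3p6 (R : realType) (p : R) (r s n : nat)
  (EQ : {set {set 'I_s}}) (EH : {set {set 'I_n}}) (x : 'I_n -> R) :
  1 < p -> (2 <= r)%N -> (r <= s)%N -> (s <= n)%N ->
  is_rgraph r EQ -> is_rgraph r EH ->
  principal_Qeigvec p EQ EH x ->
  let lambda := lambdaQH p EQ EH in
  let delta : R := (minQdeg EQ EH)%:R in
  let c : R := ((s`!) * 'C(n, s.-1))%:R in
  powR (lambda * powR (xmin x) (p - 1) / ((s.-1)`!)%:R) p
  <= c * powR delta (p - 1) / (n%:R ^+ s.-1)
     - (c * powR delta (p - 1) - powR delta p) * powR (xmin x) (p * (s.-1)%:R).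
Proof.
move=> p_gt1 r_ge2 r_le_s s_le_n _ _ x_principal; cbv zeta.
have s_ge2 : (2 <= s)%N := leq_trans r_ge2 r_le_s.
have p_neq0 : p != 0 by rewrite gt_eqF // (lt_trans ltr01).
have [x_ge0 _] := x_principal.
have [xmin0|xmin_gt0] := eqVneq (xmin x) 0; last first.
  have [v v_min] := minQdeg_attained EQ EH (leq_trans (ltnW s_ge2) s_le_n).
  apply: (minQdeg_bound_xmin_gt0 (v := v)) => //.
  by rewrite lt0r xmin_gt0 xmin_ge0.
rewrite xmin0 !powR0 ?mulr0 ?mul0r ?subr0 ?powR0 //.
by rewrite mulf_neq0 // pnatr_eq0 -lt0n -ltnS prednK // ltnW.
by rewrite subr_eq0 gt_eqF.
Qed.
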